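(* Let $R=(\mathbb{C},\mathbb{C}^4,\mathbb{C};u_0,\dots,u_3,v_0,\dots,v_3)$ be a representation of $\mathbf{Q}$ with dimension vector $(1,4,1)$. Then: (1) $R$ is globally injective if and only if $R$ has no subrepresentation of dimension vector $(1,b,1)$ with $b\in\{0,1,2,3\}$; (2) $R$ is globally surjective if and only if $R$ has no subrepresentation of dimension vector $(0,b,0)$ with $b\in\{1,2,3,4\}$.
   Context: The quiver $\mathbf{Q}$ has vertices $-1,0,1$, arrows $\eta_0,\dots,\eta_3:-1\to0$, $\phi_0,\dots,\phi_3:0\to1$ and relations $\phi_i\eta_j+\phi_j\eta_i=0$; a representation consists of vector spaces $V_{-1},V_0,V_1$ and linear maps $u_i:V_{-1}\to V_0$, $v_i:V_0\to V_1$ with $v_iu_j+v_ju_i=0$ for all $i,j$. $R$ is globally injective if $\sum_i\lambda_iu_i$ is injective for all $\lambda\in\mathbb{C}^4\setminus\{0\}$, and globally surjective if $\sum_i\lambda_iv_i$ is surjective for all $\lambda\in\mathbb{C}^4\setminus\{0\}$. *)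

From HB Require Import structures.
From mathcomp Require Import all_boot all_order all_algebra.
From mathcomp Require Import complex.
From mathcomp Require Import Rstruct.
Set Implicit Arguments. Unset Strict Implicit. Unset Printing Implicit Defensive.
Import Order.TTheory GRing.Theory Num.Theory.
Local Open Scope ring_scope.

Definition C : Type := complex Rdefinitions.R.

(* Linear maps are matrices acting on row vectors from the right:
   u i : 'M_(1,4) is a map C^1 -> C^4,  v i : 'M_(4,1) a map C^4 -> C^1.
   The composite v_i o u_j is u j *m v i. *)

Definition is_repQ (u : 'I_4 -> 'M[C]_(1,4)) (v : 'I_4 -> 'M[C]_(4,1)) : Prop :=
  forall i j : 'I_4, u j *m v i + u i *m v j = 0.

Definition lin_injective (m n : nat) (A : 'M[C]_(m,n)) : Prop :=
  forall x y : 'rV[C]_m, x *m A = y *m A -> x = y.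

Definition lin_surjective (m n : nat) (A : 'M[C]_(m,n)) : Prop :=
  forall y : 'rV[C]_n, exists x : 'rV[C]_m, x *m A = y.

Definition globally_injective (u : 'I_4 -> 'M[C]_(1,4)) : Prop :=
  forall lam : 'rV[C]_4, lam != 0 -> lin_injective (\sum_(i < 4) lam 0 i *: u i).

Definition globally_surjective (v : 'I_4 -> 'M[C]_(4,1)) : Prop :=
  forall lam : 'rV[C]_4, lam != 0 -> lin_surjective (\sum_(i < 4) lam 0 i *: v i).

(* A subrepresentation: subspaces W1 <= C, W0 <= C^4, W2 <= C (given as
   row spaces of matrices) stable under all the maps u_i, v_i. *)
Definition is_subrep (u : 'I_4 -> 'M[C]_(1,4)) (v : 'I_4 -> 'M[C]_(4,1))
  (W1 : 'M[C]_1) (W0 : 'M[C]_4) (W2 : 'M[C]_1) : Prop :=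
  forall i : 'I_4, (W1 *m u i <= W0)%MS /\ (W0 *m v i <= W2)%MS.

Definition has_subrep_dim (u : 'I_4 -> 'M[C]_(1,4)) (v : 'I_4 -> 'M[C]_(4,1))
  (a b c : nat) : Prop :=
  exists (W1 : 'M[C]_1) (W0 : 'M[C]_4) (W2 : 'M[C]_1),
    is_subrep u v W1 W0 W2 /\ \rank W1 = a /\ \rank W0 = b /\ \rank W2 = c.

From HB Require Import structures.
From mathcomp Require Import all_boot all_order all_algebra.
From mathcomp Require Import complex.
From mathcomp Require Import Rstruct.
Import Order.TTheory GRing.Theory Num.Theory.
Local Open Scope ring_scope.

(* Collect the u_i(1) as the rows of a 4x4 matrix U and the v_i^T as the rows
   of a 4x4 matrix V.  Since sum_i lam_i u_i = lam U and
   (sum_i lam_i v_i)^T = lam V, and a map C -> C^4 (resp. C^4 -> C) is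
   injective (resp. surjective) iff it is nonzero, global injectivity and
   global surjectivity say exactly that U, resp. V, is invertible.  A
   subrepresentation of dimension (1,b,1) must contain the row space of U in
   its middle term, and that row space gives one; a subrepresentation of
   dimension (0,b,0) is a subspace of the common kernel of the v_i, of
   dimension 4 - rank V. *)

Section RowMatrices.

Variable F : fieldType.

Lemma sum_scale_rows m n (lam : 'rV[F]_m) (A : 'I_m -> 'rV[F]_n) :
  \sum_(i < m) lam 0 i *: A i = lam *m \matrix_i A i.
Proof. by rewrite mulmx_sum_row; apply: eq_bigr => i _; rewrite rowK. Qed.

Lemma row_free_mulmx_neq0 m n (A : 'M[F]_(m, n)) :
  row_free A <-> forall x : 'rV_m, x != 0 -> x *m A != 0.
Proof.
split=> [freeA x | mulA_neq0]; first by rewrite mulmx_free_eq0.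
by apply: inj_row_free => x /eqP; apply: contraTeq; apply: mulA_neq0.
Qed.

Lemma row_free_rV n (x : 'rV[F]_n) : row_free x = (x != 0).
Proof. by rewrite /row_free rank_rV; case: (x != 0). Qed.

Lemma row_full_cV n (x : 'cV[F]_n) : row_full x = (x^T != 0).
Proof. by rewrite /row_full -mxrank_tr rank_rV; case: (x^T != 0). Qed.

Lemma mulmx_tr_rows_eq0 p m n (W : 'M[F]_(p, n)) (A : 'I_m -> 'cV[F]_n) :
  (W *m (\matrix_i (A i)^T)^T == 0) = [forall i, W *m A i == 0].
Proof.
rewrite -trmx_eq0 trmx_mul trmxK; apply/eqP/forallP => [WA0 i | WA0].
  by rewrite -trmx_eq0 trmx_mul -(rowK (fun k => (A k)^T)) -row_mul WA0 row0.
apply/row_matrixP => i; rewrite row_mul rowK row0 -trmx_mul.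
by rewrite (eqP (WA0 i)) trmx0.
Qed.

End RowMatrices.

Lemma lin_injectiveE m n (A : 'M[C]_(m, n)) : lin_injective A <-> row_free A.
Proof.
split=> [injA | /row_free_inj injA x y]; last exact: injA.
by apply: inj_row_free => x; rewrite -(mul0mx _ A); apply: injA.
Qed.

Lemma lin_surjectiveE m n (A : 'M[C]_(m, n)) : lin_surjective A <-> row_full A.
Proof.
split=> [surjA | fullA y].
  rewrite -sub1mx; apply/row_subP => i.
  by have [x <-] := surjA (row i 1%:M); apply: submxMl.
by have /submxP[x ->] := submx_full y fullA; exists x.
Qed.

Section Representation.

Variables (u : 'I_4 -> 'M[C]_(1, 4)) (v : 'I_4 -> 'M[C]_(4, 1)).

Let U : 'M[C]_4 := \matrix_i u i.
Let V : 'M[C]_4 := \matrix_i (v i)^T.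

Lemma globally_injectiveE : globally_injective u <-> row_free U.
Proof.
rewrite row_free_mulmx_neq0; split=> inj_u lam /inj_u;
  by rewrite lin_injectiveE sum_scale_rows row_free_rV.
Qed.

Lemma globally_surjectiveE : globally_surjective v <-> row_free V.
Proof.
have sumV (lam : 'rV[C]_4) : (\sum_(i < 4) lam 0 i *: v i)^T = lam *m V.
  by rewrite linear_sum -sum_scale_rows; apply: eq_bigr => i _; rewrite linearZ.
rewrite row_free_mulmx_neq0; split=> surj_v lam /surj_v;
  by rewrite lin_surjectiveE row_full_cV sumV.
Qed.

Lemma subrep_1b1_rank b : has_subrep_dim u v 1 b 1 -> (\rank U <= b)%N.
Proof.
move=> [W1 [W0 [W2 [subW [rankW1 [<- _]]]]]].
have fullW1 : row_full W1 by rewrite /row_full rankW1.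
apply: mxrankS; apply/row_subP => i.
by rewrite rowK -(eqmxMfull (u i) fullW1); case: (subW i).
Qed.

Lemma subrep_1b1_span : has_subrep_dim u v 1 (\rank U) 1.
Proof.
exists 1%:M, U, 1%:M; split; last by rewrite !mxrank1.
by move=> i; rewrite mul1mx submx1 -(rowK u i) row_sub.
Qed.

Lemma subrep_0b0_rank b : has_subrep_dim u v 0 b 0 -> (b <= 4 - \rank V)%N.
Proof.
move=> [W1 [W0 [W2 [subW [_ [<- /eqP]]]]]]; rewrite mxrank_eq0 => /eqP W2_0.
rewrite -(mxrank_tr V) -mxrank_ker; apply: mxrankS.
rewrite sub_kermx mulmx_tr_rows_eq0; apply/forallP => i.
by rewrite -submx0 -W2_0; case: (subW i).
Qed.

Lemma subrep_0b0_ker : has_subrep_dim u v 0 (4 - \rank V) 0.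
Proof.
exists 0, (kermx V^T), 0; split; last by rewrite mxrank_ker mxrank_tr !mxrank0.
have /forallP kerV : [forall i, kermx V^T *m v i == 0].
  by rewrite -(@mulmx_tr_rows_eq0 _ _ _ _ (kermx V^T) v) -/V mulmx_ker.
by move=> i; rewrite mul0mx sub0mx submx0; split; last exact: kerV.
Qed.

Lemma row_free_no_subrep_1b1 :
  row_free U <-> ~ (exists b : nat, (b <= 3)%N /\ has_subrep_dim u v 1 b 1).
Proof.
split=> [/eqP freeU [b [b_le3 /subrep_1b1_rank]] | no_subrep].
  by rewrite freeU leqNgt ltnS b_le3.
apply/negPn/negP => not_free; apply: no_subrep.
exists (\rank U); split; last exact: subrep_1b1_span.
by rewrite -ltnS ltn_neqAle not_free rank_leq_row.
Qed.

Lemma row_free_no_subrep_0b0 :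
  row_free V <-> ~ (exists b : nat, (1 <= b <= 4)%N /\ has_subrep_dim u v 0 b 0).
Proof.
split=> [/eqP freeV [b [/andP[b_gt0 _] /subrep_0b0_rank]] | no_subrep].
  by rewrite freeV subnn leqNgt b_gt0.
apply/negPn/negP => not_free; apply: no_subrep.
exists (4 - \rank V)%N; split; last exact: subrep_0b0_ker.
by rewrite subn_gt0 leq_subr andbT ltn_neqAle not_free rank_leq_row.
Qed.

End Representation.

Theorem mainTheorem8 (u : 'I_4 -> 'M[C]_(1,4)) (v : 'I_4 -> 'M[C]_(4,1)) :
  is_repQ u v ->
  (globally_injective u <->
     ~ (exists b : nat, (b <= 3)%N /\ has_subrep_dim u v 1 b 1)) /\
  (globally_surjective v <->
     ~ (exists b : nat, (1 <= b <= 4)%N /\ has_subrep_dim u v 0 b 0)).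
Proof.
move=> _; split.
  exact: iff_trans (globally_injectiveE u) (row_free_no_subrep_1b1 u v).
exact: iff_trans (globally_surjectiveE v) (row_free_no_subrep_0b0 u v).
Qed.
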